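(* Let $\varphi$ be a closed recHML formula and $m$ a monitor. If $m$ is sound and complete for $\varphi$ over finfinite traces, then $[\![\varphi]\!]_F=\mathrm{Act}^\omega\cup\mathrm{Act}^*$ or $[\![\varphi]\!]_F=\emptyset$.
   Context: Fix a finite set $\mathrm{Act}$ of actions, $\tau\notin\mathrm{Act}$. recHML formulae: $\varphi::=\mathrm{tt}\mid\mathrm{ff}\mid\varphi\vee\varphi\mid\varphi\wedge\varphi\mid\langle A\rangle\varphi\mid[A]\varphi\mid\min X.\varphi\mid\max X.\varphi\mid X$ with $A\subseteq\mathrm{Act}$; fixpoints bind variables; formulae are guarded. Finfinite traces are $\mathrm{Fin}=\mathrm{Act}^\omega\cup\mathrm{Act}^*$. The finfinite semantics $[\![\varphi,\sigma]\!]_F\subseteq\mathrm{Fin}$ (with $\sigma$ mapping variables to subsets of $\mathrm{Fin}$) is: $[\![\mathrm{tt}]\!]_F=\mathrm{Fin}$, $[\![\mathrm{ff}]\!]_F=\emptyset$, $\vee,\wedge$ are union and intersection, $[\![\langle A\rangle\varphi,\sigma]\!]_F=\{ag\mid a\in A, g\in[\![\varphi,\sigma]\!]_F\}$, $[\![[A]\varphi,\sigma]\!]_F=\{g\mid\forall a\in A,\forall g'.\ g=ag'\Rightarrow g'\in[\![\varphi,\sigma]\!]_F\}$, $[\![\min X.\varphi,\sigma]\!]_F=\bigcap\{S\mid[\![\varphi,\sigma[X\mapsto S]]\!]_F\subseteq S\}$, $[\![\max X.\varphi,\sigma]\!]_F=\bigcup\{S\mid S\subseteq[\![\varphi,\sigma[X\mapsto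 S]]\!]_F\}$, $[\![X,\sigma]\!]_F=\sigma(X)$; for closed formulae $\sigma$ is omitted. Monitors: $m,n::=v\mid a.m\mid m+n\mid\mathrm{rec}\,x.m\mid x\mid m\otimes n\mid m\oplus n$, verdicts $v::=\mathrm{end}\mid\mathrm{no}\mid\mathrm{yes}$, with the standard transition rules in which verdicts are irrevocable ($v\xrightarrow{a}v$ and no other transitions from verdicts). A monitor $m$ rejects (resp. accepts) a finite trace $s$ if $m\overset{s}{\Longrightarrow}\mathrm{no}$ (resp. $\mathrm{yes}$) in the weak transition relation (this coincides with the instrumentation-based definition), and rejects (accepts) $g\in\mathrm{Fin}$ if it rejects (accepts) some finite prefix of $g$. $m$ is sound for $\varphi$ over finfinite traces if for all $g\in\mathrm{Fin}$, $m$ rejects $g$ implies $g\notin[\![\varphi]\!]_F$, and $m$ accepts $g$ implies $g\in[\![\varphi]\!]_F$; it is violation-complete if $g\notin[\![\varphi]\!]_F$ implies $m$ rejects $g$, satisfaction-complete if $g\in[\![\varphi]\!]_F$ implies $m$ accepts $g$, and complete if both. *)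

From Stdlib Require Import List Arith PeanoNat.
Import ListNotations.
Set Implicit Arguments.

Section RecHML.
Variable Act : Type.

Inductive trace : Type :=
| Fin : list Act -> trace
| Inf : (nat -> Act) -> trace.

Definition head (g : trace) : option Act :=
  match g with
  | Fin [] => None
  | Fin (a :: _) => Some a
  | Inf f => Some (f 0)
  end.

Definition tail (g : trace) : trace :=
  match g with
  | Fin [] => Fin []
  | Fin (_ :: l) => Fin l
  | Inf f => Inf (fun n => f (S n))
  end.

Fixpoint is_prefix (s : list Act) (g : trace) : Prop :=
  match s with
  | [] => True
  | a :: s' => head g = Some a /\ is_prefix s' (tail g)
  end.

Inductive form : Type :=
| ftt : form
| fff : form
| for_ : form -> form -> form
| fand : form -> form -> form
| fdia : (Act -> Prop) -> form -> form
| fbox : (Act -> Prop) -> form -> form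
| fmin : nat -> form -> form
| fmax : nat -> form -> form
| fvar : nat -> form.

Definition env := nat -> trace -> Prop.
Definition upd (s : env) (X : nat) (S : trace -> Prop) : env :=
  fun Y => if Nat.eqb Y X then S else s Y.

Fixpoint sem (s : env) (phi : form) : trace -> Prop :=
  match phi with
  | ftt => fun _ => True
  | fff => fun _ => False
  | for_ p q => fun g => sem s p g \/ sem s q g
  | fand p q => fun g => sem s p g /\ sem s q g
  | fdia A p => fun g => exists a, A a /\ head g = Some a /\ sem s p (tail g)
  | fbox A p => fun g => forall a, A a -> head g = Some a -> sem s p (tail g)
  | fmin X p => fun g =>
      forall S : trace -> Prop,
        (forall h, sem (upd s X S) p h -> S h) -> S g
  | fmax X p => fun g =>
      exists S : trace -> Prop,
        (forall h, S h -> sem (upd s X S) p h) /\ S g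
  | fvar X => s X
  end.

(** closed formula, semantics with the (irrelevant) empty environment *)
Definition sem_closed (phi : form) : trace -> Prop := sem (fun _ _ => False) phi.

Fixpoint closed_in (bound : list nat) (phi : form) : Prop :=
  match phi with
  | ftt | fff => True
  | for_ p q | fand p q => closed_in bound p /\ closed_in bound q
  | fdia _ p | fbox _ p => closed_in bound p
  | fmin X p | fmax X p => closed_in (X :: bound) p
  | fvar X => In X bound
  end.
Definition closed (phi : form) : Prop := closed_in [] phi.

(** guardedness: [unguarded] lists bound variables not yet under a modality *)
Fixpoint guarded_in (unguarded : list nat) (phi : form) : Prop :=
  match phi with
  | ftt | fff => True
  | for_ p q | fand p q => guarded_in unguarded p /\ guarded_in unguarded q
  | fdia _ p | fbox _ p => guarded_in [] p
  | fmin X p | fmax X p => guarded_in (X :: unguarded) p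
  | fvar X => ~ In X unguarded
  end.
Definition guarded (phi : form) : Prop := guarded_in [] phi.

(** Monitors, recursion variables as de Bruijn indices (rec binds index 0). *)
Inductive verdict : Type := vend | vno | vyes.
Inductive parop : Type := pconj | pdisj .

Inductive mon : Type :=
| mverd : verdict -> mon
| mact : Act -> mon -> mon
| msum : mon -> mon -> mon
| mrec : mon -> mon
| mvar : nat -> mon
| mpar : parop -> mon -> mon -> mon.

Fixpoint shift (c : nat) (m : mon) : mon :=
  match m with
  | mverd v => mverd v
  | mact a m => mact a (shift c m)
  | msum m n => msum (shift c m) (shift c n)
  | mrec m => mrec (shift (S c) m)
  | mvar n => if Nat.ltb n c then mvar n else mvar (S n)
  | mpar o m n => mpar o (shift c m) (shift c n)
  end.

Fixpoint subst (k : nat) (u : mon) (m : mon) : mon :=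
  match m with
  | mverd v => mverd v
  | mact a m => mact a (subst k u m)
  | msum m n => msum (subst k u m) (subst k u n)
  | mrec m => mrec (subst (S k) (shift 0 u) m)
  | mvar n => if Nat.eqb n k then u else if Nat.ltb k n then mvar (pred n) else mvar n
  | mpar o m n => mpar o (subst k u m) (subst k u n)
  end.

(** labels: Some a for a ∈ Act, None for τ *)
Inductive step : mon -> option Act -> mon -> Prop :=
| sVrd : forall v a, step (mverd v) (Some a) (mverd v)
| sAct : forall a m, step (mact a m) (Some a) m
| sRec : forall m, step (mrec m) None (subst 0 (mrec m) m)
| sSelL : forall m n mu m', step m mu m' -> step (msum m n) mu m'
| sSelR : forall m n mu n', step n mu n' -> step (msum m n) mu n'
| sPar : forall o m n a m' n', step m (Some a) m' -> step n (Some a) n' ->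
    step (mpar o m n) (Some a) (mpar o m' n')
| sTauL : forall o m n m', step m None m' -> step (mpar o m n) None (mpar o m' n)
| sTauR : forall o m n n', step n None n' -> step (mpar o m n) None (mpar o m n')
| sVrE : forall o, step (mpar o (mverd vend) (mverd vend)) None (mverd vend)
| sVrC1L : forall m, step (mpar pconj (mverd vyes) m) None m
| sVrC1R : forall m, step (mpar pconj m (mverd vyes)) None m
| sVrC2L : forall m, step (mpar pconj (mverd vno) m) None (mverd vno)
| sVrC2R : forall m, step (mpar pconj m (mverd vno)) None (mverd vno)
| sVrD1L : forall m, step (mpar pdisj (mverd vno) m) None m
| sVrD1R : forall m, step (mpar pdisj m (mverd vno)) None m
| sVrD2L : forall m, step (mpar pdisj (mverd vyes) m) None (mverd vyes)
| sVrD2R : forall m, step (mpar pdisj m (mverd vyes)) None (mverd vyes).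

Inductive taus : mon -> mon -> Prop :=
| taus_refl : forall m, taus m m
| taus_step : forall m m1 n, step m None m1 -> taus m1 n -> taus m n.

Inductive weak : mon -> list Act -> mon -> Prop :=
| weak_nil : forall m n, taus m n -> weak m [] n
| weak_cons : forall m m1 m2 a s n,
    taus m m1 -> step m1 (Some a) m2 -> weak m2 s n -> weak m (a :: s) n.

Definition rejects_fin (m : mon) (s : list Act) : Prop := weak m s (mverd vno).
Definition accepts_fin (m : mon) (s : list Act) : Prop := weak m s (mverd vyes).
Definition rejects (m : mon) (g : trace) : Prop :=
  exists s, is_prefix s g /\ rejects_fin m s.
Definition accepts (m : mon) (g : trace) : Prop :=
  exists s, is_prefix s g /\ accepts_fin m s.

Definition sound (m : mon) (phi : form) : Prop :=
  forall g : trace,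
    (rejects m g -> ~ sem_closed phi g) /\ (accepts m g -> sem_closed phi g).
Definition violation_complete (m : mon) (phi : form) : Prop :=
  forall g : trace, ~ sem_closed phi g -> rejects m g.
Definition satisfaction_complete (m : mon) (phi : form) : Prop :=
  forall g : trace, sem_closed phi g -> accepts m g.
Definition complete (m : mon) (phi : form) : Prop :=
  violation_complete m phi /\ satisfaction_complete m phi.

End RecHML.

(** Idea: the empty trace [Fin []] is a trace in its own right, and its only
    finite prefix is [[]].  Completeness therefore makes the monitor reach a
    verdict on the empty prefix already: acceptance if the empty trace
    satisfies phi, rejection otherwise.  But [[]] is a prefix of every
    finfinite trace, so the monitor then accepts (resp. rejects) every trace,
    and soundness transfers that verdict to phi on all traces. *)
From Stdlib Require Import List Classical.
Import ListNotations.

Section EmptyTrace.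
Context {Act : Type}.

Lemma prefix_of_empty_trace {s : list Act} :
  is_prefix s (Fin []) -> s = [].
Proof.
  destruct s as [|a s]; simpl; [reflexivity|].
  intros [Hhead _]; discriminate.
Qed.

Lemma verdict_on_empty_trace (m : mon Act) (v : verdict) :
  (exists s, is_prefix s (Fin []) /\ weak m s (mverd Act v)) ->
  weak m [] (mverd Act v).
Proof.
  intros [s [Hpre Hweak]].
  rewrite (prefix_of_empty_trace Hpre) in Hweak; exact Hweak.
Qed.

Lemma verdict_everywhere (m : mon Act) (v : verdict) (g : trace Act) :
  weak m [] (mverd Act v) ->
  exists s, is_prefix s g /\ weak m s (mverd Act v).
Proof. intro Hweak; exists []; split; [exact I | exact Hweak]. Qed.

Lemma sound_accepts_empty {m : mon Act} {phi : form Act} :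
  sound m phi -> accepts m (Fin []) -> forall g, sem_closed phi g.
Proof.
  intros Hsound Hacc g.
  apply (proj2 (Hsound g)), verdict_everywhere, verdict_on_empty_trace, Hacc.
Qed.

Lemma sound_rejects_empty {m : mon Act} {phi : form Act} :
  sound m phi -> rejects m (Fin []) -> forall g, ~ sem_closed phi g.
Proof.
  intros Hsound Hrej g.
  apply (proj1 (Hsound g)), verdict_everywhere, verdict_on_empty_trace, Hrej.
Qed.

End EmptyTrace.

Theorem mainTheorem8 (Act : Type) (HfinAct : exists l : list Act, forall a : Act, In a l)
  (phi : form Act) (m : mon Act)
  (Hclosed : closed phi) (Hguarded : guarded phi)
  (Hsound : sound m phi) (Hcomplete : complete m phi) :
  (forall g : trace Act, sem_closed phi g) \/ (forall g : trace Act, ~ sem_closed phi g).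
Proof.
  destruct Hcomplete as [Hviolation Hsatisfaction].
  destruct (classic (sem_closed phi (Fin []))) as [Hsat | Hviol].
  - left; exact (sound_accepts_empty Hsound (Hsatisfaction _ Hsat)).
  - right; exact (sound_rejects_empty Hsound (Hviolation _ Hviol)).
Qed.
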